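(* Convolution $(\sigma,\tau)\mapsto\sigma*\tau$ is a Baire class 1 map from $\mathcal T\times\mathcal T$ to $\mathcal T$.
   Context: Standing setting: $(X,\|\cdot\|)$ is a separable infinite-dimensional Banach space and $d$ is a translation-invariant stable pseudometric on $X$ such that $\mathrm{Id}\colon(X,\|\cdot\|)\to(X,d)$ is a coarse equivalence. $\Delta$ is a countable $\|\cdot\|$-dense $\mathbb Q$-linear subspace of $X$; for $x\in\Delta$, $\bar x(\lambda,y)=d(\lambda x,y)$. $\mathcal T$ is the closure of $\{\bar x:x\in\Delta\}$ in $\mathbb R^{\mathbb Q\times\Delta}$ (pointwise topology, metrizable). For $\sigma,\tau\in\mathcal T$ with defining sequences $(x_n),(y_m)$ (i.e. $\bar x_n\to\sigma$, $\bar y_m\to\tau$), $\sigma*\tau=\lim_n\lim_m\overline{x_n+y_m}$. A map is Baire class 1 if preimages of open sets are $F_\sigma$. *)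

From Stdlib Require Import Reals List QArith Qcanon Qreals ClassicalEpsilon.
Open Scope R_scope.

Section Setting.
Context {X : Type} (plus : X -> X -> X) (scal : R -> X -> X) (zero : X)
        (norm : X -> R).

Definition vsub (x y : X) : X := plus x (scal (-1) y).

Definition is_vector_space : Prop :=
  (forall x y z, plus x (plus y z) = plus (plus x y) z) /\
  (forall x y, plus x y = plus y x) /\
  (forall x, plus x zero = x) /\
  (forall x, plus x (scal (-1) x) = zero) /\
  (forall a x y, scal a (plus x y) = plus (scal a x) (scal a y)) /\
  (forall a b x, scal (a + b) x = plus (scal a x) (scal b x)) /\
  (forall a b x, scal (a * b) x = scal a (scal b x)) /\
  (forall x, scal 1 x = x).

Definition is_norm : Prop :=
  (forall x, norm x = 0 -> x = zero) /\
  (forall a x, norm (scal a x) = Rabs a * norm x) /\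
  (forall x y, norm (plus x y) <= norm x + norm y).

Definition norm_complete : Prop :=
  forall u : nat -> X,
    (forall eps, eps > 0 -> exists N, forall n m, (n >= N)%nat -> (m >= N)%nat ->
        norm (vsub (u n) (u m)) < eps) ->
    exists l, forall eps, eps > 0 -> exists N, forall n, (n >= N)%nat ->
        norm (vsub (u n) l) < eps.

Definition is_banach : Prop := is_vector_space /\ is_norm /\ norm_complete.

Definition norm_separable : Prop :=
  exists s : nat -> X, forall x eps, eps > 0 -> exists n, norm (vsub x (s n)) < eps.

Fixpoint lsum (v : nat -> X) (c : nat -> R) (n : nat) : X :=
  match n with
  | O => zero
  | S k => plus (lsum v c k) (scal (c k) (v k))
  end.

Definition infinite_dimensional : Prop :=
  forall n : nat, exists v : nat -> X,
    forall c : nat -> R, lsum v c n = zero -> forall i, (i < n)%nat -> c i = 0.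

Context (d : X -> X -> R).

Definition is_pseudometric : Prop :=
  (forall x, d x x = 0) /\ (forall x y, 0 <= d x y) /\
  (forall x y, d x y = d y x) /\ (forall x y z, d x z <= d x y + d y z).

Definition translation_invariant : Prop :=
  forall x y z, d (plus x z) (plus y z) = d x y.

Definition d_bounded (u : nat -> X) : Prop :=
  exists x0 M, forall n, d (u n) x0 <= M.

Definition stable : Prop :=
  forall (u v : nat -> X) (a b : nat -> R) (l1 l2 : R),
    d_bounded u -> d_bounded v ->
    (forall n, Un_cv (fun m => d (u n) (v m)) (a n)) -> Un_cv a l1 ->
    (forall m, Un_cv (fun n => d (u n) (v m)) (b m)) -> Un_cv b l2 ->
    l1 = l2.

Definition id_coarse_equivalence : Prop :=
  (forall r, exists s, forall x y, norm (vsub x y) <= r -> d x y <= s) /\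
  (forall r, exists s, forall x y, d x y <= r -> norm (vsub x y) <= s).

Context (Delta : X -> Prop).

Definition countable_dense_Qsubspace : Prop :=
  Delta zero /\
  (forall x y, Delta x -> Delta y -> Delta (plus x y)) /\
  (forall (q : Qc) x, Delta x -> Delta (scal (Q2R (this q)) x)) /\
  (exists e : nat -> X, forall x, Delta x -> exists n, e n = x) /\
  (forall x eps, eps > 0 -> exists y, Delta y /\ norm (vsub x y) < eps).

(** Coordinates of R^(Q x Delta). *)
Definition Idx : Type := (Qc * {x : X | Delta x})%type.

Definition xbar (x : X) : Idx -> R :=
  fun p => d (scal (Q2R (this (fst p))) x) (proj1_sig (snd p)).

(** T: closure of {xbar x : x in Delta} in the product (pointwise) topology. *)
Definition inT (s : Idx -> R) : Prop :=
  forall (F : list Idx) (eps : R), eps > 0 ->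
    exists x, Delta x /\ forall p, In p F -> Rabs (xbar x p - s p) < eps.

Definition defining_seq (u : nat -> X) (s : Idx -> R) : Prop :=
  (forall n, Delta (u n)) /\ (forall p, Un_cv (fun n => xbar (u n) p) (s p)).

Definition conv_spec (s t r : Idx -> R) : Prop :=
  forall u v, defining_seq u s -> defining_seq v t ->
    exists g : nat -> Idx -> R,
      (forall n p, Un_cv (fun m => xbar (plus (u n) (v m)) p) (g n p)) /\
      (forall p, Un_cv (fun n => g n p) (r p)).

Definition conv (s t : Idx -> R) : Idx -> R :=
  epsilon (inhabits (fun _ : Idx => 0)) (conv_spec s t).

End Setting.

(** Product topology on R^I and on R^I x R^I. *)
Definition close_on {I : Type} (F : list I) (eps : R) (f g : I -> R) : Prop :=
  forall p, In p F -> Rabs (g p - f p) < eps.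

Definition open_fun {I : Type} (U : (I -> R) -> Prop) : Prop :=
  forall f, U f -> exists F eps, eps > 0 /\ forall g, close_on F eps f g -> U g.

Definition open_pair {I : Type} (W : (I -> R) -> (I -> R) -> Prop) : Prop :=
  forall f1 f2, W f1 f2 -> exists F1 F2 eps, eps > 0 /\
    forall g1 g2, close_on F1 eps f1 g1 -> close_on F2 eps f2 g2 -> W g1 g2.

Definition closed_pair {I : Type} (C : (I -> R) -> (I -> R) -> Prop) : Prop :=
  open_pair (fun f1 f2 => ~ C f1 f2).

(** f : A x A -> R^I (A a subset of R^I) is Baire class 1: the preimage of every
    (relatively) open set is F_sigma in A x A (relative topology). *)
Definition baire1_on {I : Type} (A : (I -> R) -> Prop)
    (f : (I -> R) -> (I -> R) -> (I -> R)) : Prop :=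
  forall V : (I -> R) -> Prop, open_fun V ->
    exists C : nat -> (I -> R) -> (I -> R) -> Prop,
      (forall k, closed_pair (C k)) /\
      (forall s t, A s -> A t -> (V (f s t) <-> exists k, C k s t)).

From Stdlib Require Import Reals List QArith Qcanon Qreals ClassicalEpsilon.
From Stdlib Require Import Rtopology Lra Lia ProofIrrelevance.
From Stdlib Require Cantor.
Open Scope R_scope.

(* For x in Delta translation invariance gives
   xbar (x + w) (lambda, y) = xbar w (lambda, y - lambda x), so that
   (sigma * tau)(p) = lim_n tau (shift x_n p) for any defining sequence (x_n)
   of sigma; stability is exactly what makes this limit exist independently of
   the choices, since it is a common value of the two iterated limits of
   d(lambda x_n, y - lambda z_m), where (z_m) is a defining sequence of tau.  Consequently xbar x * tau = tau o shift x and
   sigma |-> sigma * tau is continuous for every fixed tau.  Hence sigma * tau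
   lies in an open V iff, for some k, every xbar x that is 1/k-close to sigma on
   the first k coordinates has a whole basic 1/k-neighbourhood of
   tau o shift x inside V; each of these conditions is closed in (sigma, tau),
   which exhibits the preimage of V as an F_sigma set. *)

Lemma inv_INR_S_pos (n : nat) : 0 < / INR (S n).
Proof. apply Rinv_0_lt_compat, lt_0_INR; lia. Qed.

Lemma inv_INR_S_le (m n : nat) : (m <= n)%nat -> / INR (S n) <= / INR (S m).
Proof. intro H. apply Rinv_le_contravar; [apply lt_0_INR; lia | apply le_INR; lia]. Qed.

Lemma inv_INR_S_eventually_lt (e : R) :
  e > 0 -> exists N, forall n, (N <= n)%nat -> / INR (S n) < e.
Proof.
  intro He. destruct (archimed_cor1 e He) as [N [HN HN0]]. exists N. intros n Hn.
  eapply Rle_lt_trans; [|exact HN].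
  apply Rinv_le_contravar; [apply lt_0_INR; lia | apply le_INR; lia].
Qed.

(* Weaker than strict monotonicity, which is all the subsequence arguments need. *)
Definition cofinal (phi : nat -> nat) : Prop := forall k, (k <= phi k)%nat.

Lemma cofinal_comp (phi psi : nat -> nat) :
  cofinal phi -> cofinal psi -> cofinal (fun k => phi (psi k)).
Proof. intros Hphi Hpsi k. specialize (Hpsi k). specialize (Hphi (psi k)). lia. Qed.

Lemma Un_cv_cofinal (u : nat -> R) (l : R) (phi : nat -> nat) :
  cofinal phi -> Un_cv u l -> Un_cv (fun k => u (phi k)) l.
Proof.
  intros Hphi Hu eps He. destruct (Hu eps He) as [N HN]. exists N.
  intros n Hn. apply HN. specialize (Hphi n). lia.
Qed.

Lemma Un_cv_const (c : R) : Un_cv (fun _ => c) c.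
Proof. intros eps He. exists 0%nat. intros. unfold Rdist. rewrite Rminus_diag, Rabs_R0. lra. Qed.

Lemma Un_cv_Rabs_le (u : nat -> R) (l M : R) :
  Un_cv u l -> (forall n, Rabs (u n) <= M) -> Rabs l <= M.
Proof.
  intros Hu HM. apply Rnot_lt_le. intro Hlt.
  destruct (Hu (Rabs l - M)) as [N HN]; [lra|].
  specialize (HN N (le_n N)). specialize (HM N). unfold Rdist in HN.
  pose proof (Rabs_triang_inv l (u N)). rewrite Rabs_minus_sym in HN. lra.
Qed.

Lemma ValAdh_cofinal_cv (u : nat -> R) (l : R) :
  ValAdh u l -> exists phi, cofinal phi /\ Un_cv (fun k => u (phi k)) l.
Proof.
  intro Hl.
  destruct (choice (fun k n => (k <= n)%nat /\ Rabs (u n - l) < / INR (S k)))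
    as [phi Hphi].
  { intro k. apply (Hl (fun y => Rabs (y - l) < / INR (S k)) k).
    exists (mkposreal _ (inv_INR_S_pos k)). intros y Hy. exact Hy. }
  exists phi. split; [intro k; apply Hphi|].
  intros eps He. destruct (inv_INR_S_eventually_lt eps He) as [N HN]. exists N.
  intros n Hn. unfold Rdist. destruct (Hphi n) as [_ Hclose]. specialize (HN n Hn). lra.
Qed.

Lemma bounded_cofinal_cv (u : nat -> R) (M : R) :
  (forall n, Rabs (u n) <= M) -> exists phi l, cofinal phi /\ Un_cv (fun k => u (phi k)) l.
Proof.
  intro HM.
  destruct (Bolzano_Weierstrass u (fun c => -M <= c <= M) (compact_P3 (-M) M)) as [l Hl].
  { intro n. pose proof (Rle_abs (u n)). pose proof (Rle_abs (- u n)).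
    rewrite Rabs_Ropp in *. specialize (HM n). lra. }
  destruct (ValAdh_cofinal_cv u l Hl) as [phi Hphi]. exists phi, l. exact Hphi.
Qed.

Lemma not_Un_cv_cofinal (u : nat -> R) (l : R) :
  ~ Un_cv u l ->
  exists eps phi, eps > 0 /\ cofinal phi /\ forall k, eps <= Rabs (u (phi k) - l).
Proof.
  intro Hn.
  assert (Hfar : exists eps, eps > 0 /\
                   forall N, exists n, (N <= n)%nat /\ eps <= Rabs (u n - l)).
  { apply NNPP. intro Hnot. apply Hn. intros eps He. apply NNPP. intro HN. apply Hnot.
    exists eps. split; [exact He|]. intro N. apply NNPP. intro Hno. apply HN. exists N.
    intros n Hn'. unfold Rdist. apply Rnot_le_lt. intro Hle. apply Hno. exists n.
    split; [lia | exact Hle]. }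
  destruct Hfar as [eps [He Hf]]. destruct (choice _ Hf) as [phi Hphi].
  exists eps, phi. split; [exact He|]. split; intro k; apply Hphi.
Qed.

Lemma Un_cv_of_cofinal_limits (u : nat -> R) (M L : R) :
  (forall n, Rabs (u n) <= M) ->
  (forall phi l, cofinal phi -> Un_cv (fun k => u (phi k)) l -> l = L) ->
  Un_cv u L.
Proof.
  intros HM Hlim. apply NNPP. intro Hn.
  destruct (not_Un_cv_cofinal u L Hn) as [eps [phi [He [Hphi Hfar]]]].
  destruct (bounded_cofinal_cv (fun k => u (phi k)) M) as [psi [l [Hpsi Hcv]]];
    [intro; apply HM|].
  pose proof (Hlim _ l (cofinal_comp phi psi Hphi Hpsi) Hcv) as ->.
  destruct (Hcv eps He) as [N HN]. specialize (HN N (le_n N)). specialize (Hfar (psi N)).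
  unfold Rdist in HN. lra.
Qed.

Lemma iterated_limits_agree (A : nat -> nat -> R) (a b : nat -> R) (M : R) :
  (forall n m, Rabs (A n m) <= M) ->
  (forall n, Un_cv (fun m => A n m) (a n)) ->
  (forall m, Un_cv (fun n => A n m) (b m)) ->
  (forall phi psi l1 l2, cofinal phi -> cofinal psi ->
     Un_cv (fun k => a (phi k)) l1 -> Un_cv (fun k => b (psi k)) l2 -> l1 = l2) ->
  exists L, Un_cv a L /\ Un_cv b L.
Proof.
  intros HA Ha Hb Hagree.
  assert (Hba : forall n, Rabs (a n) <= M) by (intro n; exact (Un_cv_Rabs_le _ _ _ (Ha n) (HA n))).
  assert (Hbb : forall m, Rabs (b m) <= M)
    by (intro m; exact (Un_cv_Rabs_le _ _ _ (Hb m) (fun n => HA n m))).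
  destruct (bounded_cofinal_cv b M Hbb) as [psi [L [Hpsi HL]]].
  assert (HaL : Un_cv a L).
  { apply (Un_cv_of_cofinal_limits a M L Hba). intros phi l Hphi Hl.
    exact (Hagree phi psi l L Hphi Hpsi Hl HL). }
  exists L. split; [exact HaL|].
  apply (Un_cv_of_cofinal_limits b M L Hbb). intros psi' l Hpsi' Hl. symmetry.
  exact (Hagree (fun k => k) psi' L l (fun k => le_n k) Hpsi' HaL Hl).
Qed.

Lemma eventually_forall_In {A : Type} (F : list A) (P : A -> nat -> Prop) :
  (forall p, In p F -> exists N, forall n, (N <= n)%nat -> P p n) ->
  exists N, forall n, (N <= n)%nat -> forall p, In p F -> P p n.
Proof.
  induction F as [|q F IH]; intro H.
  - exists 0%nat. intros n _ p [].
  - destruct (H q (or_introl eq_refl)) as [N1 HN1].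
    destruct IH as [N2 HN2]; [intros p Hp; apply H; right; exact Hp|].
    exists (Nat.max N1 N2). intros n Hn p [<-|Hp].
    + apply HN1. lia.
    + apply HN2; [lia | exact Hp].
Qed.

Lemma finite_slack {A : Type} (F : list A) (a : A -> R) (b : R) :
  (forall p, In p F -> a p < b) -> exists e, e > 0 /\ forall p, In p F -> a p + e < b.
Proof.
  induction F as [|q F IH]; intro H.
  - exists 1. split; [lra|]. intros p [].
  - destruct IH as [e [He HF]]; [intros p Hp; apply H; right; exact Hp|].
    assert (Hq : a q < b) by (apply H; left; reflexivity).
    exists (Rmin ((b - a q) / 2) e). pose proof (Rmin_l ((b - a q) / 2) e).
    pose proof (Rmin_r ((b - a q) / 2) e). split; [apply Rmin_pos; lra|].
    intros p [<-|Hp]; [lra|]. specialize (HF p Hp). lra.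
Qed.

Lemma close_on_sym {I : Type} (F : list I) (eps : R) (f g : I -> R) :
  close_on F eps f g -> close_on F eps g f.
Proof. intros H p Hp. rewrite Rabs_minus_sym. apply H, Hp. Qed.

Lemma close_on_trans {I : Type} (F : list I) (e1 e2 : R) (f g h : I -> R) :
  close_on F e1 f g -> close_on F e2 g h -> close_on F (e1 + e2) f h.
Proof.
  intros Hfg Hgh p Hp. specialize (Hfg p Hp). specialize (Hgh p Hp).
  pose proof (Rdist_tri (h p) (f p) (g p)). unfold Rdist in *.
  rewrite (Rabs_minus_sym (g p)) in *. lra.
Qed.

Definition Qc_enum (n : nat) : Qc :=
  let (a, r) := Cantor.of_nat n in
  let (b, c) := Cantor.of_nat r in
  Q2Qc (Qmake (Z.of_nat a - Z.of_nat b) (Pos.of_nat c)).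

Lemma Qc_enum_surj (q : Qc) : exists n, Qc_enum n = q.
Proof.
  destruct q as [[z p] Hq].
  exists (Cantor.to_nat (Z.to_nat z, Cantor.to_nat (Z.to_nat (- z), Pos.to_nat p))).
  unfold Qc_enum. rewrite !Cantor.cancel_of_to, Pos2Nat.id.
  replace (Z.of_nat (Z.to_nat z) - Z.of_nat (Z.to_nat (- z)))%Z with z by lia.
  apply Qc_is_canon. exact (Qred_correct (z # p)).
Qed.

Section Convolution.
Context {X : Type} (plus : X -> X -> X) (scal : R -> X -> X) (zero : X)
  (d : X -> X -> R) (Delta : X -> Prop).
Context (Hvs : is_vector_space plus scal zero) (Hd : is_pseudometric d)
  (Hti : translation_invariant plus d) (Hst : stable d).
Context (HDelta0 : Delta zero)
  (HDelta_plus : forall x y, Delta x -> Delta y -> Delta (plus x y))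
  (HDelta_scal : forall (q : Qc) x, Delta x -> Delta (scal (Q2R (this q)) x))
  (Delta_enum : nat -> X) (Delta_enum_surj : forall x, Delta x -> exists n, Delta_enum n = x).

Local Notation xb := (xbar scal d Delta).
Local Notation T := (inT scal d Delta).
Local Notation defseq := (defining_seq scal d Delta).
Local Notation cnv := (conv plus scal d Delta).

Lemma plus_sub_cancel_l (a b : X) : plus (plus a b) (scal (-1) a) = b.
Proof.
  destruct Hvs as [Hassoc [Hcomm [H0 [Hopp _]]]].
  rewrite (Hcomm a b), <- Hassoc, Hopp, H0. reflexivity.
Qed.

Lemma plus_0_l (z : X) : plus zero z = z.
Proof. destruct Hvs as [_ [Hcomm [H0 _]]]. rewrite Hcomm, H0. reflexivity. Qed.

Lemma plus_opp_l (z : X) : plus (scal (-1) z) z = zero.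
Proof. destruct Hvs as [_ [Hcomm [_ [Hopp _]]]]. rewrite Hcomm, Hopp. reflexivity. Qed.

Lemma d_plus_l (y w : X) : d (plus y w) y = d w zero.
Proof.
  destruct Hvs as [_ [_ [_ [Hopp _]]]].
  rewrite <- (Hti (plus y w) y (scal (-1) y)), plus_sub_cancel_l, Hopp. reflexivity.
Qed.

Lemma d_opp (z : X) : d (scal (-1) z) zero = d z zero.
Proof.
  destruct Hd as [_ [_ [Hsym _]]].
  rewrite <- (Hti (scal (-1) z) zero z), plus_opp_l, plus_0_l. apply Hsym.
Qed.

Lemma Delta_opp (x : X) : Delta x -> Delta (scal (-1) x).
Proof.
  intro Hx. replace (-1) with (Q2R (this (Q2Qc (-1 # 1)))) by (unfold Q2R; simpl; lra).
  apply HDelta_scal, Hx.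
Qed.

Definition shift_pt (x : X) (p : Idx Delta) : X :=
  plus (proj1_sig (snd p)) (scal (-1) (scal (Q2R (this (fst p))) x)).

(* The coordinate (lambda, y) moved to (lambda, y - lambda x); the second branch
   is a junk value, never taken when [x] is in [Delta]. *)
Definition shift (x : X) (p : Idx Delta) : Idx Delta :=
  match excluded_middle_informative (Delta (shift_pt x p)) with
  | left H => (fst p, exist _ (shift_pt x p) H)
  | right _ => p
  end.

Lemma shift_fst (x : X) (p : Idx Delta) : fst (shift x p) = fst p.
Proof. unfold shift. destruct excluded_middle_informative; reflexivity. Qed.

Lemma shift_snd (x : X) (p : Idx Delta) : Delta x -> proj1_sig (snd (shift x p)) = shift_pt x p.
Proof.
  intro Hx. unfold shift. destruct excluded_middle_informative as [H|Hn]; [reflexivity|].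
  exfalso. apply Hn, HDelta_plus; [exact (proj2_sig (snd p))|].
  apply Delta_opp, HDelta_scal, Hx.
Qed.

Lemma d_shift_pt (x : X) (p : Idx Delta) :
  d (shift_pt x p) (proj1_sig (snd p)) = d (scal (Q2R (this (fst p))) x) zero.
Proof. unfold shift_pt. rewrite d_plus_l. apply d_opp. Qed.

Lemma xbar_plus_l (x w : X) (p : Idx Delta) : Delta x -> xb (plus x w) p = xb w (shift x p).
Proof.
  intro Hx. unfold xbar. rewrite shift_fst, shift_snd by exact Hx. unfold shift_pt.
  destruct Hvs as [_ [_ [_ [_ [Hdistr _]]]]]. rewrite Hdistr.
  set (a := scal (Q2R (this (fst p))) x). set (b := scal (Q2R (this (fst p))) w).
  rewrite <- (Hti (plus a b) (proj1_sig (snd p)) (scal (-1) a)), plus_sub_cancel_l.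
  reflexivity.
Qed.

Lemma xbar_plus_r (x w : X) (p : Idx Delta) : Delta w -> xb (plus x w) p = xb x (shift w p).
Proof. intro Hw. destruct Hvs as [_ [Hcomm _]]. rewrite Hcomm. apply xbar_plus_l, Hw. Qed.

Lemma xbar_plus_cv_l (x : X) (v : nat -> X) (t : Idx Delta -> R) (p : Idx Delta) :
  Delta x -> defseq v t -> Un_cv (fun m => xb (plus x (v m)) p) (t (shift x p)).
Proof.
  intros Hx [_ Hv]. apply (Un_cv_ext (fun m => xb (v m) (shift x p))); [|apply Hv].
  intro m. symmetry. apply xbar_plus_l, Hx.
Qed.

Lemma xbar_plus_cv_r (y : X) (u : nat -> X) (s : Idx Delta -> R) (p : Idx Delta) :
  Delta y -> defseq u s -> Un_cv (fun n => xb (plus (u n) y) p) (s (shift y p)).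
Proof.
  intros Hy [_ Hu]. apply (Un_cv_ext (fun n => xb (u n) (shift y p))); [|apply Hu].
  intro n. symmetry. apply xbar_plus_r, Hy.
Qed.

Lemma defining_seq_scal_bounded (u : nat -> X) (s : Idx Delta -> R) (q : Qc) :
  defseq u s -> exists M, forall n, d (scal (Q2R (this q)) (u n)) zero <= M.
Proof.
  intros [_ Hu]. destruct Hd as [_ [Hpos _]].
  destruct (maj_by_pos _ (exist _ _ (Hu (q, exist _ zero HDelta0)))) as [M [_ HM]].
  exists M. intro n. specialize (HM n). unfold xbar in HM; simpl in HM.
  rewrite Rabs_pos_eq in HM by apply Hpos. exact HM.
Qed.

(* Both iterated limits of xbar (u n + v m) p are iterated limits of
   d (lambda u_n, y - lambda v_m) along arbitrary subsequences, so stability applies. *)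
Lemma shift_limits_agree (u v : nat -> X) (s t : Idx Delta -> R) (p : Idx Delta) :
  defseq u s -> defseq v t ->
  exists L, Un_cv (fun n => t (shift (u n) p)) L /\ Un_cv (fun m => s (shift (v m) p)) L.
Proof.
  intros Hu Hv. destruct Hd as [_ [Hpos [Hsym Htri]]].
  destruct (defining_seq_scal_bounded u s (fst p) Hu) as [M1 HU].
  destruct (defining_seq_scal_bounded v t (fst p) Hv) as [M2 HW].
  set (lam := Q2R (this (fst p))). set (y := proj1_sig (snd p)).
  set (U := fun n => scal lam (u n)). set (W := fun m => shift_pt (v m) p).
  assert (HA : forall n m, xb (plus (u n) (v m)) p = d (U n) (W m)).
  { intros n m. rewrite xbar_plus_r by apply (proj1 Hv). unfold xbar.
    rewrite shift_fst, shift_snd by apply (proj1 Hv). reflexivity. }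
  assert (Hrow : forall n, Un_cv (fun m => d (U n) (W m)) (t (shift (u n) p))).
  { intro n. apply (Un_cv_ext _ _ (fun m => HA n m)), xbar_plus_cv_l; [apply (proj1 Hu)|exact Hv]. }
  assert (Hcol : forall m, Un_cv (fun n => d (U n) (W m)) (s (shift (v m) p))).
  { intro m. apply (Un_cv_ext _ _ (fun n => HA n m)), xbar_plus_cv_r; [apply (proj1 Hv)|exact Hu]. }
  assert (HUb : forall n, d (U n) zero <= M1) by exact HU.
  assert (HWy : forall m, d (W m) y <= M2) by (intro m; unfold W, y; rewrite d_shift_pt; apply HW).
  apply (iterated_limits_agree (fun n m => d (U n) (W m)) _ _ (M1 + d zero y + M2) ); auto.
  - intros n m. rewrite Rabs_pos_eq by apply Hpos.
    pose proof (Htri (U n) zero (W m)). pose proof (Htri zero y (W m)).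
    rewrite (Hsym y (W m)) in *. specialize (HUb n). specialize (HWy m). lra.
  - intros phi psi l1 l2 Hphi Hpsi Hl1 Hl2.
    apply (Hst (fun k => U (phi k)) (fun k => W (psi k))
              (fun k => t (shift (u (phi k)) p)) (fun k => s (shift (v (psi k)) p)) l1 l2).
    + exists zero, M1. intro; apply HUb.
    + exists y, M2. intro; apply HWy.
    + intro n. exact (Un_cv_cofinal _ _ psi Hpsi (Hrow (phi n))).
    + exact Hl1.
    + intro m. exact (Un_cv_cofinal (fun n => d (U n) (W (psi m))) _ phi Hphi (Hcol (psi m))).
    + exact Hl2.
Qed.

Definition Delta_enum_sig (n : nat) : {x | Delta x} :=
  match excluded_middle_informative (Delta (Delta_enum n)) with
  | left H => exist _ (Delta_enum n) H
  | right _ => exist _ zero HDelta0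
  end.

Definition Idx_enum (n : nat) : Idx Delta :=
  let (i, j) := Cantor.of_nat n in (Qc_enum i, Delta_enum_sig j).

Lemma Idx_enum_surj (p : Idx Delta) : exists n, Idx_enum n = p.
Proof.
  destruct p as [q [x Hx]].
  destruct (Qc_enum_surj q) as [i Hi]. destruct (Delta_enum_surj x Hx) as [j Hj].
  exists (Cantor.to_nat (i, j)). unfold Idx_enum. rewrite Cantor.cancel_of_to, Hi.
  f_equal. unfold Delta_enum_sig. destruct excluded_middle_informative as [H|H]; subst.
  - f_equal. apply proof_irrelevance.
  - contradiction.
Qed.

(* The windows with tolerance 1/(k+1) form a countable neighbourhood base of the
   product topology on [Idx Delta -> R]. *)
Definition window (k : nat) : list (Idx Delta) := map Idx_enum (seq 0 k).

Lemma window_eventually_In (p : Idx Delta) : exists j, forall k, (j < k)%nat -> In p (window k).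
Proof.
  destruct (Idx_enum_surj p) as [j Hj]. exists j. intros k Hk. unfold window.
  rewrite <- Hj. apply in_map, in_seq. lia.
Qed.

Lemma window_mono (k k' : nat) (p : Idx Delta) :
  (k <= k')%nat -> In p (window k) -> In p (window k').
Proof.
  intros H Hin. unfold window in *. apply in_map_iff in Hin. destruct Hin as [n [<- Hn]].
  apply in_map. apply in_seq in Hn. apply in_seq. lia.
Qed.

Lemma window_covers (F : list (Idx Delta)) :
  exists K, forall k, (K <= k)%nat -> forall p, In p F -> In p (window k).
Proof.
  apply eventually_forall_In. intros p _. destruct (window_eventually_In p) as [j Hj].
  exists (S j). intros n Hn. apply Hj. lia.
Qed.

Lemma close_on_window_mono (k k' : nat) (f g : Idx Delta -> R) : (k <= k')%nat ->
  close_on (window k') (/ INR (S k')) f g -> close_on (window k) (/ INR (S k)) f g.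
Proof.
  intros H Hc p Hp. eapply Rlt_le_trans; [apply Hc, (window_mono k); assumption|].
  apply inv_INR_S_le, H.
Qed.

Lemma defining_seq_of_windows (c : R) (u : nat -> X) (s : Idx Delta -> R) : c > 0 ->
  (forall k, Delta (u k) /\ close_on (window k) (c * / INR (S k)) s (xb (u k))) ->
  defseq u s.
Proof.
  intros Hc Hu. split; [intro k; apply Hu|].
  intros p eps He. destruct (window_eventually_In p) as [j Hj].
  destruct (inv_INR_S_eventually_lt (eps / c)) as [N HN]; [apply Rdiv_lt_0_compat; lra|].
  exists (Nat.max N (S j)). intros n Hn. unfold Rdist.
  destruct (Hu n) as [_ Hclose]. specialize (Hclose p (Hj n ltac:(lia))).
  specialize (HN n ltac:(lia)). eapply Rlt_le_trans; [exact Hclose|].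
  replace eps with (c * (eps / c)) by (field; lra). apply Rmult_le_compat_l; lra.
Qed.

Lemma defining_seq_exists (s : Idx Delta -> R) : T s -> exists u, defseq u s.
Proof.
  intro Hs. destruct (choice (fun k x => Delta x /\
                        close_on (window k) (1 * / INR (S k)) s (xb x))) as [u Hu].
  { intro k. apply Hs. rewrite Rmult_1_l. apply inv_INR_S_pos. }
  exists u. apply (defining_seq_of_windows 1); [lra | exact Hu].
Qed.

Lemma xbar_in_T (x : X) : Delta x -> T (xb x).
Proof.
  intros Hx F eps He. exists x. split; [exact Hx|].
  intros. rewrite Rminus_diag, Rabs_R0. lra.
Qed.

Lemma conv_spec_exists (s t : Idx Delta -> R) :
  T s -> T t -> exists r, conv_spec plus scal d Delta s t r.
Proof.
  intros Hs Ht.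
  destruct (defining_seq_exists s Hs) as [u0 Hu0]. destruct (defining_seq_exists t Ht) as [v0 Hv0].
  destruct (choice (fun p L => Un_cv (fun m => s (shift (v0 m) p)) L)) as [r Hr].
  { intro p. destruct (shift_limits_agree u0 v0 s t p Hu0 Hv0) as [L [_ HL]]. exists L. exact HL. }
  exists r. intros u v Hu Hv. exists (fun n p => t (shift (u n) p)). split.
  - intros n p. apply xbar_plus_cv_l; [apply (proj1 Hu) | exact Hv].
  - intro p. destruct (shift_limits_agree u v0 s t p Hu Hv0) as [L [HL1 HL2]].
    rewrite (UL_sequence _ _ _ (Hr p) HL2). exact HL1.
Qed.

Lemma conv_cv (s t : Idx Delta -> R) (u : nat -> X) : T s -> T t -> defseq u s ->
  forall p, Un_cv (fun n => t (shift (u n) p)) (cnv s t p).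
Proof.
  intros Hs Ht Hu p. destruct (defining_seq_exists t Ht) as [v Hv].
  destruct (epsilon_spec (inhabits (fun _ : Idx Delta => 0)) (conv_spec plus scal d Delta s t)
              (conv_spec_exists s t Hs Ht) u v Hu Hv) as [g [Hrow Hlim]].
  apply (Un_cv_ext (fun n => g n p)); [|apply Hlim].
  intro n. apply (UL_sequence _ _ _ (Hrow n p)), xbar_plus_cv_l; [apply (proj1 Hu) | exact Hv].
Qed.

Lemma conv_in_T (s t : Idx Delta -> R) : T s -> T t -> T (cnv s t).
Proof.
  intros Hs Ht F eps He.
  destruct (defining_seq_exists s Hs) as [u Hu]. destruct (defining_seq_exists t Ht) as [v Hv].
  assert (He2 : eps / 2 > 0) by lra.
  destruct (eventually_forall_In F (fun p n => Rabs (t (shift (u n) p) - cnv s t p) < eps / 2))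
    as [N HN].
  { intros p _. destruct (conv_cv s t u Hs Ht Hu p _ He2) as [N HN].
    exists N. intros n Hn. apply HN. lia. }
  destruct (eventually_forall_In F
              (fun p m => Rabs (xb (plus (u N) (v m)) p - t (shift (u N) p)) < eps / 2)) as [M HM].
  { intros p _. destruct (xbar_plus_cv_l (u N) v t p (proj1 Hu N) Hv _ He2) as [M HM].
    exists M. intros m Hm. apply HM. lia. }
  exists (plus (u N) (v M)). split; [apply HDelta_plus; [apply (proj1 Hu) | apply (proj1 Hv)]|].
  intros p Hp. specialize (HN N (le_n N) p Hp). specialize (HM M (le_n M) p Hp).
  pose proof (Rdist_tri (xb (plus (u N) (v M)) p) (cnv s t p) (t (shift (u N) p))).
  unfold Rdist in *. lra.
Qed.

Lemma conv_xbar_l (x : X) (t : Idx Delta -> R) :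
  Delta x -> T t -> forall p, cnv (xb x) t p = t (shift x p).
Proof.
  intros Hx Ht p.
  assert (Hu : defseq (fun _ => x) (xb x)) by (split; [intro; exact Hx | intro; apply Un_cv_const]).
  symmetry. apply (UL_sequence (fun _ => t (shift x p))); [apply Un_cv_const|].
  exact (conv_cv _ _ _ (xbar_in_T x Hx) Ht Hu p).
Qed.

Lemma xbar_approx_conv (s t : Idx Delta -> R) (p : Idx Delta) (k : nat) : T s -> T t ->
  exists x, Delta x /\ close_on (window k) (/ INR (S k)) s (xb x) /\
            Rabs (t (shift x p) - cnv s t p) < / INR (S k).
Proof.
  intros Hs Ht. destruct (defining_seq_exists s Hs) as [u Hu].
  destruct (eventually_forall_In (window k)
              (fun q n => Rabs (xb (u n) q - s q) < / INR (S k))) as [N1 HN1].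
  { intros q _. destruct (proj2 Hu q _ (inv_INR_S_pos k)) as [N HN].
    exists N. intros n Hn. apply HN. lia. }
  destruct (conv_cv s t u Hs Ht Hu p _ (inv_INR_S_pos k)) as [N2 HN2].
  exists (u (Nat.max N1 N2)). split; [apply (proj1 Hu)|]. split.
  - intros q Hq. apply HN1; [lia | exact Hq].
  - apply HN2. lia.
Qed.

Lemma conv_continuous_l (s t : Idx Delta -> R) (p : Idx Delta) (eps : R) :
  T s -> T t -> eps > 0 ->
  exists k, forall s', T s' -> close_on (window k) (/ INR (S k)) s s' ->
    Rabs (cnv s' t p - cnv s t p) < eps.
Proof.
  intros Hs Ht He. apply NNPP. intro Hn.
  assert (Hbad : forall k, exists s', T s' /\ close_on (window k) (/ INR (S k)) s s' /\
                   eps <= Rabs (cnv s' t p - cnv s t p)).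
  { intro k. apply NNPP. intro Hno. apply Hn. exists k. intros s' Hs' Hclose.
    apply Rnot_le_lt. intro Hle. apply Hno. exists s'. auto. }
  destruct (choice _ Hbad) as [sk Hsk].
  destruct (choice (fun k x => Delta x /\ close_on (window k) (/ INR (S k)) (sk k) (xb x) /\
              Rabs (t (shift x p) - cnv (sk k) t p) < / INR (S k))) as [x Hx].
  { intro k. apply xbar_approx_conv; [apply Hsk | exact Ht]. }
  assert (Hdef : defseq x s).
  { apply (defining_seq_of_windows 2); [lra|]. intro k. split; [apply Hx|].
    replace (2 * / INR (S k)) with (/ INR (S k) + / INR (S k)) by ring.
    apply (close_on_trans _ _ _ _ (sk k)); [apply Hsk | apply Hx]. }
  assert (He2 : eps / 2 > 0) by lra.
  destruct (conv_cv s t x Hs Ht Hdef p _ He2) as [N1 HN1].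
  destruct (inv_INR_S_eventually_lt _ He2) as [N2 HN2].
  set (k := Nat.max N1 N2). specialize (HN1 k ltac:(lia)). specialize (HN2 k ltac:(lia)).
  destruct (Hx k) as [_ [_ Hxk]]. destruct (Hsk k) as [_ [_ Hfar]].
  pose proof (Rdist_tri (cnv (sk k) t p) (cnv s t p) (t (shift (x k) p))).
  unfold Rdist in *. rewrite Rabs_minus_sym in Hxk. lra.
Qed.

Lemma conv_continuous_l_list (s t : Idx Delta -> R) (F : list (Idx Delta)) (eps : R) :
  T s -> T t -> eps > 0 ->
  exists k, forall s', T s' -> close_on (window k) (/ INR (S k)) s s' ->
    close_on F eps (cnv s t) (cnv s' t).
Proof.
  intros Hs Ht He. induction F as [|q F [k2 Hk2]].
  - exists 0%nat. intros s' _ _ p [].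
  - destruct (conv_continuous_l s t q eps Hs Ht He) as [k1 Hk1].
    exists (Nat.max k1 k2). intros s' Hs' Hclose p [<-|Hp].
    + apply Hk1; [exact Hs'|].
      apply (close_on_window_mono k1 (Nat.max k1 k2)); [lia | exact Hclose].
    + apply Hk2; [exact Hs' | | exact Hp].
      apply (close_on_window_mono k2 (Nat.max k1 k2)); [lia | exact Hclose].
Qed.

Definition nbhd_in (V : (Idx Delta -> R) -> Prop) (k : nat) (g : Idx Delta -> R) : Prop :=
  forall h, close_on (window k) (/ INR (S k)) g h -> V h.

(* [fun p => t (shift x p)] is [xbar x * t] (conv_xbar_l); quantifying over all
   [x] near [s] instead of evaluating [s * t] is what makes the condition closed. *)
Definition conv_preimage_piece (V : (Idx Delta -> R) -> Prop) (k : nat)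
    (s t : Idx Delta -> R) : Prop :=
  forall x, Delta x -> close_on (window k) (/ INR (S k)) (xb x) s ->
    nbhd_in V k (fun p => t (shift x p)).

Lemma conv_preimage_piece_closed (V : (Idx Delta -> R) -> Prop) (k : nat) :
  closed_pair (conv_preimage_piece V k).
Proof.
  intros s t Hn.
  assert (Hx : exists x h, Delta x /\ close_on (window k) (/ INR (S k)) (xb x) s /\
                 close_on (window k) (/ INR (S k)) (fun p => t (shift x p)) h /\ ~ V h).
  { apply NNPP. intro Hno. apply Hn. intros x Hx Hclose h Hh. apply NNPP. intro HnV.
    apply Hno. exists x, h. auto. }
  destruct Hx as [x [h [Hx [Hxs [Hth HnV]]]]].
  destruct (finite_slack (window k) (fun p => Rabs (s p - xb x p)) _ Hxs) as [e1 [He1 H1]].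
  destruct (finite_slack (window k) (fun p => Rabs (h p - t (shift x p))) _ Hth) as [e2 [He2 H2]].
  exists (window k), (map (shift x) (window k)), (Rmin e1 e2).
  pose proof (Rmin_l e1 e2). pose proof (Rmin_r e1 e2).
  split; [apply Rmin_pos; assumption|]. intros s' t' Hs' Ht' Hpiece.
  apply HnV, (Hpiece x Hx).
  - intros p Hp. specialize (H1 p Hp). specialize (Hs' p Hp). cbv beta in H1.
    pose proof (Rdist_tri (s' p) (xb x p) (s p)). unfold Rdist in *. lra.
  - intros p Hp. specialize (H2 p Hp). specialize (Ht' (shift x p) (in_map _ _ _ Hp)).
    cbv beta in *. pose proof (Rdist_tri (h p) (t' (shift x p)) (t (shift x p))).
    unfold Rdist in *. rewrite (Rabs_minus_sym (t (shift x p))) in *. lra.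
Qed.

Lemma conv_preimage_Fsigma (V : (Idx Delta -> R) -> Prop) : open_fun V ->
  forall s t, T s -> T t -> (V (cnv s t) <-> exists k, conv_preimage_piece V k s t).
Proof.
  intros HV s t Hs Ht. split.
  - intro Hin. destruct (HV _ Hin) as [F [eps [He HF]]].
    assert (He2 : eps / 2 > 0) by lra.
    destruct (conv_continuous_l_list s t F (eps / 2) Hs Ht He2) as [k1 Hk1].
    destruct (window_covers F) as [k2 Hk2].
    destruct (inv_INR_S_eventually_lt _ He2) as [k3 Hk3].
    set (k := Nat.max k1 (Nat.max k2 k3)).
    exists k. intros x Hx Hclose h Hh. apply HF. intros p Hp.
    assert (Hxk := Hk1 (xb x) (xbar_in_T x Hx)
                     (close_on_window_mono k1 k _ _ ltac:(lia) (close_on_sym _ _ _ _ Hclose)) p Hp).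
    specialize (Hh p (Hk2 k ltac:(lia) p Hp)). cbv beta in Hh.
    rewrite <- (conv_xbar_l x t Hx Ht p) in Hh.
    specialize (Hk3 k ltac:(lia)).
    pose proof (Rdist_tri (h p) (cnv s t p) (cnv (xb x) t p)). unfold Rdist in *. lra.
  - intros [k Hk].
    destruct (conv_continuous_l_list s t (window k) (/ INR (S k)) Hs Ht (inv_INR_S_pos k))
      as [k1 Hk1].
    destruct (Hs (window k ++ window k1) (Rmin (/ INR (S k)) (/ INR (S k1)))) as [x [Hx Hxs]].
    { apply Rmin_pos; apply inv_INR_S_pos. }
    pose proof (Rmin_l (/ INR (S k)) (/ INR (S k1))).
    pose proof (Rmin_r (/ INR (S k)) (/ INR (S k1))).
    apply (Hk x Hx).
    + apply close_on_sym. intros p Hp. eapply Rlt_le_trans; [apply Hxs, in_or_app; left; exact Hp|].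
      assumption.
    + intros p Hp. rewrite <- (conv_xbar_l x t Hx Ht p), Rabs_minus_sym.
      apply (Hk1 _ (xbar_in_T x Hx)); [|exact Hp].
      intros q Hq. eapply Rlt_le_trans; [apply Hxs, in_or_app; right; exact Hq|]. assumption.
Qed.

Lemma conv_baire1 : baire1_on T cnv.
Proof.
  intros V HV. exists (conv_preimage_piece V). split.
  - intro k. apply conv_preimage_piece_closed.
  - exact (conv_preimage_Fsigma V HV).
Qed.

End Convolution.

Theorem corollary4p6
  (X : Type) (plus : X -> X -> X) (scal : R -> X -> X) (zero : X) (norm : X -> R)
  (d : X -> X -> R) (Delta : X -> Prop)
  (HB : is_banach plus scal zero norm)
  (Hsep : norm_separable plus scal norm)
  (Hinf : infinite_dimensional plus scal zero)
  (Hd : is_pseudometric d)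
  (Hti : translation_invariant plus d)
  (Hst : stable d)
  (Hce : id_coarse_equivalence plus scal norm d)
  (HDelta : countable_dense_Qsubspace plus scal zero norm Delta) :
  (forall s t, inT scal d Delta s -> inT scal d Delta t ->
      inT scal d Delta (conv plus scal d Delta s t)) /\
  baire1_on (inT scal d Delta) (conv plus scal d Delta).
Proof.
  destruct HB as [Hvs _].
  destruct HDelta as [H0 [Hplus [Hscal [[enum Henum] _]]]].
  split.
  - exact (conv_in_T plus scal zero d Delta Hvs Hd Hti Hst H0 Hplus Hscal enum Henum).
  - exact (conv_baire1 plus scal zero d Delta Hvs Hd Hti Hst H0 Hplus Hscal enum Henum).
Qed.
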